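(* Let $A$ be a commutative ring. Then there is a natural bijection of right $\mathrm{GL}_2(A)$-sets $\pi_0(\Gamma(A))\leftrightarrow \mathrm{GE}_2(A)\backslash \mathrm{GL}_2(A)$.
   Context: $\Gamma(A)$ is the graph whose vertices are classes of unimodular rows $(a,b)\in A^2$ modulo multiplication by units, with $\{[u],[v]\}$ an edge when the matrix with rows $u,v$ lies in $\mathrm{GL}_2(A)$; $\mathrm{GL}_2(A)$ acts on the right by matrix multiplication. $E_2(A)$ is the subgroup of $\mathrm{SL}_2(A)$ generated by elementary matrices, and $\mathrm{GE}_2(A)$ is the subgroup of $\mathrm{GL}_2(A)$ generated by $E_2(A)$ and the invertible diagonal matrices. *)

From HB Require Import structures.
From mathcomp Require Import all_boot all_order all_algebra.
From Stdlib Require Import Relations.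
Set Implicit Arguments.
Unset Strict Implicit.
Unset Printing Implicit Defensive.
Import GRing.Theory.
Local Open Scope ring_scope.

(* A : comPzRingType = arbitrary commutative ring
   (the zero ring is allowed). Units and invertibility are stated as Props. *)

Section GammaDefs.
Variable A : comPzRingType.

Definition is_unit (a : A) : Prop := exists b : A, a * b = 1.

Definition unimodular (u : 'rV[A]_2) : Prop :=
  exists x y : A, u 0 0 * x + u 0 1 * y = 1.

Definition unit_equiv (u v : 'rV[A]_2) : Prop :=
  exists l : A, is_unit l /\ v = l *: u.

Definition inGL2 (M : 'M[A]_2) : Prop :=
  exists N : 'M[A]_2, M *m N = 1%:M /\ N *m M = 1%:M.

Definition rows2 (u v : 'rV[A]_2) : 'M[A]_2 :=
  \matrix_(i < 2, j < 2) if i == 0 then u 0 j else v 0 j.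

(* edges of Gamma(A), lifted to representatives *)
Definition gamma_edge (u v : 'rV[A]_2) : Prop := inGL2 (rows2 u v).

(* one step: same vertex (unit multiple) or adjacent vertices *)
Definition gamma_step (u v : 'rV[A]_2) : Prop :=
  unimodular u /\ unimodular v /\ (unit_equiv u v \/ gamma_edge u v).

Definition gamma_connected : relation 'rV[A]_2 :=
  clos_refl_sym_trans _ gamma_step.

Definition elementary (M : 'M[A]_2) : Prop :=
  exists t : A,
    M = \matrix_(i < 2, j < 2) (if i == j then 1 else if (i == 0) && (j == 1) then t else 0)
 \/ M = \matrix_(i < 2, j < 2) (if i == j then 1 else if (i == 1) && (j == 0) then t else 0).

Definition inv_diag (M : 'M[A]_2) : Prop :=
  exists a b : A, is_unit a /\ is_unit b /\
    M = \matrix_(i < 2, j < 2) (if i == j then (if i == 0 then a else b) else 0).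

Inductive gen_subgroup (S : 'M[A]_2 -> Prop) : 'M[A]_2 -> Prop :=
  | gen_in M : S M -> gen_subgroup S M
  | gen_one : gen_subgroup S 1%:M
  | gen_mul M N : gen_subgroup S M -> gen_subgroup S N -> gen_subgroup S (M *m N)
  | gen_inv M N : gen_subgroup S M -> M *m N = 1%:M -> N *m M = 1%:M ->
                  gen_subgroup S N.

Definition inE2 : 'M[A]_2 -> Prop := gen_subgroup elementary.

Definition inGE2 : 'M[A]_2 -> Prop :=
  gen_subgroup (fun M => inE2 M \/ inv_diag M).

End GammaDefs.

From HB Require Import structures.
From mathcomp Require Import all_boot all_order all_algebra.
From Stdlib Require Import Relations.
From mathcomp Require Import ring.
Set Implicit Arguments.
Unset Strict Implicit.
Unset Printing Implicit Defensive.
Import GRing.Theory.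
Local Open Scope ring_scope.

(* The bijection sends the coset GE_2(A) g to the component of the first row
   of g.  Every unimodular row is the first row of an invertible matrix, and
   two invertible matrices with the same first row differ on the left by an
   invertible lower triangular matrix, which lies in GE_2(A).  Left
   multiplication by a generator of GE_2(A) keeps the first row in its
   component: a lower elementary matrix fixes it, a diagonal one rescales it
   by a unit, and an upper elementary one fixes the second row, to which both
   first rows are adjacent.  Conversely, for an edge [u]-[v] the matrix with
   rows u, v and its product by [[0, 1], [-1, 0]] in E_2(A) have first rows
   u and v, so the completions of adjacent rows lie in one coset. *)

Section Gamma.
Variable A : comPzRingType.
Implicit Types (a b t : A) (g h k M N : 'M[A]_2) (u v : 'rV[A]_2).

Lemma ord2P (i : 'I_2) : i = 0 \/ i = 1.
Proof. by case: i => [[|[|i]] Hi] //; [left|right]; apply: val_inj. Qed.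

Lemma rv2P u v : u 0 0 = v 0 0 -> u 0 1 = v 0 1 -> u = v.
Proof. by move=> *; apply/rowP => j; case: (ord2P j) => ->. Qed.

Lemma mx2P M N :
  M 0 0 = N 0 0 -> M 0 1 = N 0 1 -> M 1 0 = N 1 0 -> M 1 1 = N 1 1 -> M = N.
Proof.
by move=> *; apply/matrixP => i j; case: (ord2P i) => ->; case: (ord2P j) => ->.
Qed.

Lemma big_ord2 (F : 'I_2 -> A) : \sum_(i < 2) F i = F 0 + F 1.
Proof. by rewrite big_ord_recl big_ord1; congr (_ + F _); apply: val_inj. Qed.

Lemma det_mx22 M : \det M = M 0 0 * M 1 1 - M 0 1 * M 1 0.
Proof.
rewrite (expand_det_row _ 0) big_ord2 /cofactor !det_mx11 !mxE /=.
have -> : lift 0 0 = 1 :> 'I_2 by apply: val_inj.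
have -> : lift 1 0 = 0 :> 'I_2 by apply: val_inj.
by rewrite /bump /=; ring.
Qed.

Lemma inGL2_det M d : \det M * d = 1 -> inGL2 M.
Proof.
move=> detMd; exists (d *: \adj M).
by rewrite -scalemxAr mul_mx_adj -scalemxAl mul_adj_mx scale_scalar_mx mulrC detMd.
Qed.

Lemma inGL2_unit_det M : inGL2 M -> is_unit (\det M).
Proof. by case=> N [MN _]; exists (\det N); rewrite -det_mulmx MN det1. Qed.

Lemma inGL2_mul g h : inGL2 g -> inGL2 h -> inGL2 (g *m h).
Proof.
move=> [g' [gg' g'g]] [h' [hh' h'h]]; exists (h' *m g'); split.
  by rewrite mulmxA -(mulmxA g) hh' mulmx1 gg'.
by rewrite mulmxA -(mulmxA h') g'g mulmx1 h'h.
Qed.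

Lemma unimodular_row0 g : inGL2 g -> unimodular (row 0 g).
Proof.
move=> /inGL2_unit_det [d]; rewrite det_mx22 => detgd.
by exists (g 1 1 * d), (- (g 1 0 * d)); rewrite !mxE -detgd; ring.
Qed.

Lemma unimodular_completion u : unimodular u -> exists g, inGL2 g /\ row 0 g = u.
Proof.
case=> x [y uxy].
exists (\matrix_(i, j) if i == 0 then u 0 j else if j == 0 then - y else x).
split; last by apply: rv2P; rewrite !mxE.
by apply: (@inGL2_det _ 1); rewrite det_mx22 !mxE /= mulr1 mulrN opprK.
Qed.

Definition elem_up t : 'M[A]_2 :=
  \matrix_(i < 2, j < 2) (if i == j then 1 else if (i == 0) && (j == 1) then t else 0).
Definition elem_lo t : 'M[A]_2 :=
  \matrix_(i < 2, j < 2) (if i == j then 1 else if (i == 1) && (j == 0) then t else 0).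
Definition diag2 a b : 'M[A]_2 :=
  \matrix_(i < 2, j < 2) (if i == j then (if i == 0 then a else b) else 0).
(* = [[0, 1], [-1, 0]] *)
Definition rot : 'M[A]_2 := elem_up 1 *m elem_lo (-1) *m elem_up 1.

Lemma mulmx2E M N i j : (M *m N) i j = M i 0 * N 0 j + M i 1 * N 1 j.
Proof. by rewrite mxE big_ord2. Qed.

Lemma row1_elem_up_mul t g : row 1 (elem_up t *m g) = row 1 g.
Proof. by apply: rv2P; rewrite !mxE !big_ord2 !mxE /= mul0r add0r mul1r. Qed.

Lemma row0_elem_lo_mul t g : row 0 (elem_lo t *m g) = row 0 g.
Proof. by apply: rv2P; rewrite !mxE !big_ord2 !mxE /= mul0r addr0 mul1r. Qed.

Lemma row0_diag2_mul a b g : row 0 (diag2 a b *m g) = a *: row 0 g.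
Proof. by apply: rv2P; rewrite !mxE !big_ord2 !mxE /= mul0r addr0. Qed.

Lemma row0_rot_mul g : row 0 (rot *m g) = row 1 g.
Proof. by apply: rv2P; rewrite !mxE !big_ord2 !mulmx2E !mxE /=; ring. Qed.

Lemma elementary_GL2 M : elementary M -> inGL2 M.
Proof. by case=> t [->|->]; apply: (@inGL2_det _ 1); rewrite det_mx22 !mxE /=; ring. Qed.

Lemma inv_diag_GL2 M : inv_diag M -> inGL2 M.
Proof.
case=> a [b [[a' aa'] [[b' bb'] ->]]]; apply: (@inGL2_det _ (a' * b')).
by rewrite det_mx22 !mxE /= mul0r subr0 mulrACA aa' bb' mulr1.
Qed.

Lemma gen_subgroup_trans S T k :
  (forall M, S M -> gen_subgroup T M) -> gen_subgroup S k -> gen_subgroup T k.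
Proof.
move=> ST; elim=> {k} [M /ST // | | M N _ TM _ TN | M N _ TM MN NM].
- exact: gen_one.
- exact: gen_mul.
- exact: gen_inv TM MN NM.
Qed.

Lemma gen_subgroup_GL2 S k :
  (forall M, S M -> inGL2 M) -> gen_subgroup S k -> inGL2 k.
Proof.
move=> SGL; elim=> {k} [M /SGL // | | M N _ GM _ GN | M N _ _ MN NM].
- by exists 1%:M; rewrite mulmx1.
- exact: inGL2_mul.
- by exists M.
Qed.

Lemma inGE2_gen k :
  inGE2 k -> gen_subgroup (fun M => elementary M \/ inv_diag M) k.
Proof.
apply: gen_subgroup_trans => M [E2M | DM]; last by apply: gen_in; right.
by apply: gen_subgroup_trans E2M => N EN; apply: gen_in; left.
Qed.

Lemma inGE2_GL2 k : inGE2 k -> inGL2 k.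
Proof.
move/inGE2_gen; apply: gen_subgroup_GL2 => M [].
  exact: elementary_GL2.
exact: inv_diag_GL2.
Qed.

Lemma elem_up_GE2 t : inGE2 (elem_up t).
Proof. by apply/gen_in; left; apply/gen_in; exists t; left. Qed.

Lemma elem_lo_GE2 t : inGE2 (elem_lo t).
Proof. by apply/gen_in; left; apply/gen_in; exists t; right. Qed.

Lemma diag2_GE2 a b : is_unit a -> is_unit b -> inGE2 (diag2 a b).
Proof. by move=> ua ub; apply/gen_in; right; exists a, b. Qed.

Lemma rot_GE2 : inGE2 rot.
Proof.
by do !apply: gen_mul; [exact: elem_up_GE2 | exact: elem_lo_GE2 | exact: elem_up_GE2].
Qed.

Definition GE2_coset g h : Prop := exists k, inGE2 k /\ h = k *m g.

Lemma GE2_coset_sym g h : GE2_coset g h -> GE2_coset h g.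
Proof.
case=> k [GEk ->]; have [k' [kk' k'k]] := inGE2_GL2 GEk.
by exists k'; rewrite mulmxA k'k mul1mx; split; first exact: gen_inv GEk kk' k'k.
Qed.

Lemma GE2_coset_trans g1 g2 g3 :
  GE2_coset g1 g2 -> GE2_coset g2 g3 -> GE2_coset g1 g3.
Proof.
case=> k [GEk ->] [k' [GEk' ->]].
by exists (k' *m k); rewrite mulmxA; split; first exact: gen_mul.
Qed.

(* [[1, 0], [c, d]] = diag2 1 d *m elem_lo (d^-1 * c), with d a unit. *)
Lemma inGE2_row0_1 M : inGL2 M -> row 0 M = row 0 1%:M -> inGE2 M.
Proof.
move=> GLM M0; have M00 : M 0 0 = 1 by move/rowP/(_ 0): M0; rewrite !mxE.
have M01 : M 0 1 = 0 by move/rowP/(_ 1): M0; rewrite !mxE.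
have [d M11d] : is_unit (M 1 1).
  by have := inGL2_unit_det GLM; rewrite det_mx22 M00 M01 mul1r mul0r subr0.
have -> : M = diag2 1 (M 1 1) *m elem_lo (d * M 1 0).
  apply: mx2P; rewrite !mulmx2E !mxE /= ?M00 ?M01;
  by rewrite ?mul0r ?mul1r ?mulr0 ?mulr1 ?add0r ?addr0 // mulrA M11d mul1r.
apply: gen_mul; last exact: elem_lo_GE2.
by apply: diag2_GE2; [exists 1; rewrite mulr1 | exists d].
Qed.

Lemma GE2_coset_row0 g h : inGL2 g -> inGL2 h -> row 0 g = row 0 h -> GE2_coset g h.
Proof.
move=> GLg GLh g0h0; have [g' [gg' g'g]] := GLg.
exists (h *m g'); split; last by rewrite -mulmxA g'g mulmx1.
apply: inGE2_row0_1; first by apply: inGL2_mul => //; exists g.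
by rewrite row_mul -g0h0 -row_mul gg'.
Qed.

Lemma GE2_coset_row0_mul k g h : inGE2 k -> inGL2 g -> inGL2 h ->
  row 0 (k *m g) = row 0 h -> GE2_coset g h.
Proof.
move=> GEk GLg GLh kg0h0; apply: (@GE2_coset_trans _ (k *m g)).
  by exists k.
by apply: GE2_coset_row0 => //; apply: inGL2_mul => //; exact: inGE2_GL2.
Qed.

Lemma gamma_connected_rows g : inGL2 g -> gamma_connected (row 0 g) (row 1 g).
Proof.
move=> GLg; apply: rst_step; split; first exact: unimodular_row0.
split.
  case: GLg => g' [gg' _]; exists (g' 0 1), (g' 1 1).
  by rewrite !mxE -mulmx2E gg' mxE.
by right; congr inGL2: GLg; apply: mx2P; rewrite !mxE.
Qed.

Lemma gamma_connected_unimodular u v :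
  gamma_connected u v -> unimodular u <-> unimodular v.
Proof. by elim=> {u v} [u v [? [? _]] | | | ] //; tauto. Qed.

Definition keeps_component k : Prop :=
  forall g, inGL2 g -> gamma_connected (row 0 (k *m g)) (row 0 g).

Lemma gen_subgroup_keeps_component S k :
  (forall M, S M -> inGL2 M /\ keeps_component M) ->
  gen_subgroup S k -> keeps_component k.
Proof.
move=> SK; elim=> {k} [M /SK [] // | | M N _ KM GN KN | M N _ KM MN NM] g GLg.
- by rewrite mul1mx; apply: rst_refl.
- have GLNg : inGL2 (N *m g).
    by apply: inGL2_mul => //; apply: gen_subgroup_GL2 GN => ? /SK [].
  by rewrite -mulmxA; apply: rst_trans (KM _ GLNg) (KN _ GLg).
- have GLNg : inGL2 (N *m g) by apply: inGL2_mul => //; exists M.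
  by apply: rst_sym; move: (KM _ GLNg); rewrite mulmxA MN mul1mx.
Qed.

Lemma elem_up_keeps_component t : keeps_component (elem_up t).
Proof.
move=> g GLg; have GLug : inGL2 (elem_up t *m g).
  by apply: inGL2_mul => //; apply: elementary_GL2; exists t; left.
apply: rst_trans (gamma_connected_rows GLug) _.
by rewrite row1_elem_up_mul; apply: rst_sym; exact: gamma_connected_rows.
Qed.

Lemma elem_lo_keeps_component t : keeps_component (elem_lo t).
Proof. by move=> g _; rewrite row0_elem_lo_mul; apply: rst_refl. Qed.

Lemma unimodularZ a u : is_unit a -> unimodular u -> unimodular (a *: u).
Proof.
case=> a' aa' [x [y uxy]]; exists (a' * x), (a' * y).
by rewrite !mxE -uxy -[RHS]mul1r -aa'; ring.
Qed.

Lemma diag2_keeps_component a b : is_unit a -> keeps_component (diag2 a b).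
Proof.
move=> ua g GLg; rewrite row0_diag2_mul; apply: rst_sym; apply: rst_step.
have u0 := unimodular_row0 GLg.
by split; [|split; [exact: unimodularZ | left; exists a]].
Qed.

Lemma GE2_keeps_component k : inGE2 k -> keeps_component k.
Proof.
move/inGE2_gen; apply: gen_subgroup_keeps_component => M GM.
split; first by case: GM; [exact: elementary_GL2 | exact: inv_diag_GL2].
case: GM => [[t [->|->]] | [a [b [ua [_ ->]]]]].
- exact: elem_up_keeps_component.
- exact: elem_lo_keeps_component.
- exact: diag2_keeps_component.
Qed.

Lemma gamma_step_GE2_coset u v g h : gamma_step u v ->
  inGL2 g -> inGL2 h -> row 0 g = u -> row 0 h = v -> GE2_coset g h.
Proof.
case=> _ [_ [[a [ua ->]] | edge]] GLg GLh g0 h0.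
  apply: (@GE2_coset_row0_mul (diag2 a 1)) => //.
    by apply: diag2_GE2 => //; exists 1; rewrite mulr1.
  by rewrite row0_diag2_mul g0.
apply: (@GE2_coset_trans _ (rows2 u v)).
  by apply: GE2_coset_row0 => //; apply/rowP => j; rewrite !mxE -g0 mxE.
apply: (GE2_coset_row0_mul rot_GE2) => //.
by rewrite row0_rot_mul; apply/rowP => j; rewrite !mxE -h0 mxE.
Qed.

Lemma gamma_connected_GE2_coset u v g h : gamma_connected u v ->
  inGL2 g -> inGL2 h -> row 0 g = u -> row 0 h = v -> GE2_coset g h.
Proof.
move=> uv; elim: uv g h => {u v} [u v uv | u | u v _ IH | u w v uw IH1 _ IH2]
  g h GLg GLh g0 h0.
- exact: gamma_step_GE2_coset uv GLg GLh g0 h0.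
- by apply: GE2_coset_row0; rewrite ?g0 ?h0.
- exact/GE2_coset_sym/IH.
- have [f [GLf f0]] : exists f, inGL2 f /\ row 0 f = w.
    apply/unimodular_completion/(gamma_connected_unimodular uw).
    by rewrite -g0; exact: unimodular_row0.
  exact: GE2_coset_trans (IH1 _ _ GLg GLf g0 f0) (IH2 _ _ GLf GLh f0 h0).
Qed.

End Gamma.

Theorem theorem3p3 (A : comPzRingType) :
  exists f : 'M[A]_2 -> 'rV[A]_2,
    (forall g, inGL2 g -> unimodular (f g)) /\
    (forall g h, inGL2 g -> inGL2 h ->
       (gamma_connected (f g) (f h) <-> exists k, inGE2 k /\ h = k *m g)) /\
    (forall v, unimodular v -> exists g, inGL2 g /\ gamma_connected v (f g)) /\
    (forall g h, inGL2 g -> inGL2 h -> gamma_connected (f (g *m h)) (f g *m h)).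
Proof.
exists (row 0); split; first exact: unimodular_row0.
split.
  move=> g h GLg GLh; split; first by move/gamma_connected_GE2_coset; apply.
  by case=> k [GEk ->]; apply: rst_sym; apply: GE2_keeps_component.
split.
  move=> v /unimodular_completion [g [GLg g0]].
  by exists g; split=> //; rewrite g0; apply: rst_refl.
by move=> g h _ _; rewrite row_mul; apply: rst_refl.
Qed.
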